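(* Let $(\Gamma,M)$ be an E-GCM graph with Coxeter group $W$ acting on $V$ by the quasi-standard geometric representation. Fix $i\ne j$ in $I_n$ and a positive integer $k$. If $m_{ij}=\infty$, then $(s_is_j)^k.\alpha_i=a\alpha_i+b\alpha_j$ and $s_j(s_is_j)^k.\alpha_i=c\alpha_i+d\alpha_j$ with $a,b,c,d>0$. Now suppose $m_{ij}<\infty$. If $2k<m_{ij}$, then $(s_is_j)^k.\alpha_i=a\alpha_i+b\alpha_j$ with $a\ge0$, $b>0$; moreover this is a multiple of $\alpha_j$ if and only if $m_{ij}$ is odd and $k=(m_{ij}-1)/2$, in which case $(s_is_j)^k.\alpha_i=\frac{-M_{ji}}{2\cos(\pi/m_{ij})}\alpha_j$. If $2k<m_{ij}-1$, then $s_j(s_is_j)^k.\alpha_i=a\alpha_i+b\alpha_j$ with $a>0$, $b\ge0$; moreover this is a multiple of $\alpha_i$ if and only if $m_{ij}$ is even and $k=(m_{ij}-2)/2$, in which case $s_j(s_is_j)^k.\alpha_i=\alpha_i$.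
   Context: E-GCM $M=(M_{ij})_{i,j\in I_n}$: real, $M_{ii}=2$, $M_{ij}\le0$ ($i\ne j$), $M_{ij}\ne0\iff M_{ji}\ne0$, nonzero $M_{ij}M_{ji}$ either $\ge4$ or $=4\cos^2(\pi/m)$ with $m\ge3$ integer. $W$: generators $s_i$, $s_i^2=e$, $(s_is_j)^{m_{ij}}=e$, where $m_{ij}=k$ if $M_{ij}M_{ji}=4\cos^2(\pi/k)$ for an integer $k\ge2$ (so $m_{ij}=2$ iff $M_{ij}M_{ji}=0$) and $m_{ij}=\infty$ if $M_{ij}M_{ji}\ge4$. Quasi-standard geometric representation: $V$ real vector space with basis $(\alpha_i)$, $s_i.v=v-2B(\alpha_i,v)\alpha_i$ with $B(\alpha_i,\alpha_j)=\tfrac12M_{ij}$, i.e. $s_i.\alpha_j=\alpha_j-M_{ij}\alpha_i$. *)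

From HB Require Import structures.
From mathcomp Require Import all_boot all_order all_algebra.
From mathcomp Require Import all_classical all_reals.
From mathcomp Require Import trigo.
Set Implicit Arguments. Unset Strict Implicit. Unset Printing Implicit Defensive.
Import Order.TTheory GRing.Theory Num.Theory.
Local Open Scope ring_scope.

Definition is_EGCM (R : realType) (n : nat) (M : 'M[R]_n) : Prop :=
  (forall i, M i i = 2) /\
  (forall i j, i != j -> M i j <= 0) /\
  (forall i j, M i j != 0 <-> M j i != 0) /\
  (forall i j, i != j -> M i j * M j i != 0 ->
     4 <= M i j * M j i \/
     exists m : nat, (3 <= m)%N /\ M i j * M j i = 4 * (cos (pi / m%:R)) ^+ 2).

Definition mij_is (R : realType) (n : nat) (M : 'M[R]_n) (i j : 'I_n) (m : nat) : Prop :=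
  (2 <= m)%N /\ M i j * M j i = 4 * (cos (pi / m%:R)) ^+ 2.

Definition mij_inf (R : realType) (n : nat) (M : 'M[R]_n) (i j : 'I_n) : Prop :=
  4 <= M i j * M j i.

(* Quasi-standard geometric representation on V = R^n (row vectors),
   basis alpha_i = i-th unit vector. *)
Definition alpha (R : realType) (n : nat) (i : 'I_n) : 'rV[R]_n := delta_mx 0 i.

Definition Bform (R : realType) (n : nat) (M : 'M[R]_n) (i : 'I_n) (v : 'rV[R]_n) : R :=
  2^-1 * \sum_(j < n) M i j * v 0 j.

Definition srefl (R : realType) (n : nat) (M : 'M[R]_n) (i : 'I_n) (v : 'rV[R]_n)
  : 'rV[R]_n := v - (2 * Bform M i v) *: alpha R i.

Definition sisj_pow (R : realType) (n : nat) (M : 'M[R]_n) (i j : 'I_n) (k : nat)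
  (v : 'rV[R]_n) : 'rV[R]_n := iter k (fun w => srefl M i (srefl M j w)) v.

From HB Require Import structures.
From mathcomp Require Import all_boot all_order all_algebra.
From mathcomp Require Import all_classical all_reals.
From mathcomp Require Import trigo.
From mathcomp Require Import zify ring lra.
Import Order.TTheory GRing.Theory Num.Theory.
Local Open Scope ring_scope.

(* The plane spanned by alpha_i and alpha_j is stable under s_i and s_j. Put
   a = -M_ij, b = -M_ji and choose r with r^2 = ab (r = sqrt(ab) when
   m_ij = oo, r = 2 cos(pi/m_ij) otherwise). With U_p the sequence
   U_0 = 0, U_1 = 1, U_(p+2) = r U_(p+1) - U_p, induction on k gives
     (s_i s_j)^k.alpha_i     = U_(2k+1) alpha_i + (r U_(2k) / a) alpha_j,
     s_j (s_i s_j)^k.alpha_i = U_(2k+1) alpha_i + (r U_(2k+2) / a) alpha_j.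
   For r >= 2 one has U_p >= p, so all coefficients are positive. For
   r = 2 cos(pi/m) one has U_p sin(pi/m) = sin(p pi/m), which is positive for
   0 < p < m and vanishes at p = m; this yields the sign pattern and locates
   the only vanishing coefficient at 2k+1 = m, resp. 2k+2 = m. *)

(* chebU (2 * x) p is the Chebyshev polynomial of the second kind U_(p-1)(x). *)
Fixpoint chebU {R : pzRingType} (r : R) (p : nat) : R :=
  match p with
  | 0 => 0
  | 1 => 1
  | (p'.+1 as q).+1 => r * chebU r q - chebU r p'
  end.

Lemma chebUSS {R : pzRingType} (r : R) p :
  chebU r p.+2 = r * chebU r p.+1 - chebU r p.
Proof. by []. Qed.

Lemma chebU_ge_nat {R : realDomainType} (r : R) p : 2 <= r -> p%:R <= chebU r p.
Proof.
move=> r_ge2; suff : p%:R <= chebU r p /\ 1 <= chebU r p.+1 - chebU r p by case.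
elim: p => [|p [IHp IHdiff]]; first by rewrite /= subr0.
have Up1 : p.+1%:R <= chebU r p.+1 by rewrite -natr1; lra.
split=> //; rewrite chebUSS.
have : 0 <= chebU r p.+1 by apply: le_trans Up1.
nra.
Qed.

Lemma chebU_gt0 {R : realDomainType} (r : R) p : 2 <= r -> (0 < p)%N -> 0 < chebU r p.
Proof.
move=> r_ge2 p_gt0; apply: lt_le_trans (chebU_ge_nat r p r_ge2).
by rewrite ltr0n.
Qed.

Lemma chebU_cos_mul_sin {R : realType} (t : R) p :
  chebU (2 * cos t) p * sin t = sin (p%:R * t).
Proof.
suff : chebU (2 * cos t) p * sin t = sin (p%:R * t) /\
       chebU (2 * cos t) p.+1 * sin t = sin (p.+1%:R * t) by case.
elim: p => [|p [IHp IHp1]]; first by split; rewrite /= ?mul0r ?mul1r ?sin0.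
split=> //; rewrite chebUSS mulrBl -mulrA IHp1 IHp.
have -> : p.+2%:R * t = p.+1%:R * t + t by rewrite -natr1 mulrDl mul1r.
have -> : p%:R * t = p.+1%:R * t - t by rewrite -natr1 mulrDl mul1r addrK.
rewrite sinB sinD; ring.
Qed.

Section ChebyshevAtPiDiv.

Variables (R : realType) (m : nat).
Hypothesis m_ge2 : (2 <= m)%N.

Let t : R := pi / m%:R.

Lemma sin_nat_mul_pi_div_gt0 p : (0 < p < m)%N -> 0 < sin (p%:R * t).
Proof.
move=> /andP[p_gt0 p_lt_m]; have m_gt0 : 0 < m%:R :> R by rewrite ltr0n; lia.
apply: sin_gt0_pi; rewrite mulr_gt0 ?divr_gt0 ?pi_gt0 // ?ltr0n //=.
by rewrite mulrA ltr_pdivrMr // mulrC ltr_pM2l ?pi_gt0 ?ltr_nat.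
Qed.

Let sin_t_gt0 : 0 < sin t.
Proof. by have := sin_nat_mul_pi_div_gt0 1; rewrite mul1r; apply; lia. Qed.

Lemma chebU_pi_div_gt0 p : (0 < p < m)%N -> 0 < chebU (2 * cos t) p.
Proof.
move=> hp; rewrite -(pmulr_lgt0 _ sin_t_gt0) chebU_cos_mul_sin.
exact: sin_nat_mul_pi_div_gt0.
Qed.

Lemma chebU_pi_div_m : chebU (2 * cos t) m = 0.
Proof.
apply: (mulIf (lt0r_neq0 sin_t_gt0)); rewrite mul0r chebU_cos_mul_sin.
by rewrite /t mulrC divfK ?sinpi // pnatr_eq0; lia.
Qed.

Lemma chebU_pi_div_pred : chebU (2 * cos t) m.-1 = 1.
Proof.
apply: (mulIf (lt0r_neq0 sin_t_gt0)); rewrite mul1r chebU_cos_mul_sin.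
rewrite -subn1 natrB; last lia.
rewrite mulrBl mul1r {1}/t mulrC divfK ?pnatr_eq0; last lia.
by rewrite sinB sinpi cospi mul0r sub0r mulN1r opprK.
Qed.

Lemma chebU_pi_div_ge0 p : (p <= m)%N -> 0 <= chebU (2 * cos t) p.
Proof.
rewrite leq_eqVlt => /predU1P[->|p_lt_m]; first by rewrite chebU_pi_div_m.
case: p p_lt_m => [|p] p_lt_m //.
by rewrite ltW // chebU_pi_div_gt0.
Qed.

Lemma chebU_pi_div_eq0 p : (0 < p <= m)%N -> chebU (2 * cos t) p = 0 <-> p = m.
Proof.
move=> /andP[p_gt0]; rewrite leq_eqVlt => /predU1P[->|p_lt_m].
  by split=> // _; rewrite chebU_pi_div_m.
split=> [Up0|p_eq_m]; last lia.
by move: (chebU_pi_div_gt0 p); rewrite p_gt0 p_lt_m Up0 ltxx => /(_ isT).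
Qed.

Lemma cos_pi_div_gt0 : (2 < m)%N -> 0 < cos t.
Proof.
move=> m_gt2; apply: cos_gt0_pihalf.
have pi2_gt0 : 0 < pi / 2 :> R by rewrite divr_gt0 ?pi_gt0.
have t_lt : t < pi / 2.
  by rewrite /t ltr_pM2l ?pi_gt0 // ltf_pV2 ?posrE ?ltr0n ?ltr_nat //; lia.
have : 0 < t by rewrite divr_gt0 ?pi_gt0 // ltr0n; lia.
lra.
Qed.

End ChebyshevAtPiDiv.

Lemma odd_eq_half (m k : nat) : (odd m /\ k = ((m - 1) %/ 2)%N) <-> (2 * k).+1 = m.
Proof. by split=> [[m_odd ->]|<-]; [lia | split; lia]. Qed.

Lemma even_eq_half (m k : nat) : (2 <= m)%N ->
  (~~ odd m /\ k = ((m - 2) %/ 2)%N) <-> (2 * k).+2 = m.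
Proof. by move=> m_ge2; split=> [[m_even ->]|<-]; [lia | split; lia]. Qed.

Lemma alpha_comb_eq_scale_r {R : realType} {n : nat} {i j : 'I_n} (x y : R) :
  i != j ->
  (exists c, x *: alpha R i + y *: alpha R j = c *: alpha R j) <-> x = 0.
Proof.
move=> hij; split=> [[c /(congr1 (fun v : 'rV[R]_n => v 0 i))]|->].
  by rewrite !mxE (negbTE hij) /= eqxx mulr1 !mulr0 addr0.
by exists y; rewrite scale0r add0r.
Qed.

Lemma alpha_comb_eq_scale_l {R : realType} {n : nat} {i j : 'I_n} (x y : R) :
  i != j ->
  (exists c, x *: alpha R i + y *: alpha R j = c *: alpha R i) <-> y = 0.
Proof. by rewrite eq_sym addrC => /alpha_comb_eq_scale_r. Qed.

Section ReflectionFormulas.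

Variables (R : realType) (n : nat) (M : 'M[R]_n).

Lemma Bform_alpha (l p : 'I_n) : Bform M l (alpha R p) = 2^-1 * M l p.
Proof.
rewrite /Bform (bigD1 p) //= big1 => [|q /negbTE q_neq_p]; last first.
  by rewrite !mxE q_neq_p andbF mulr0.
by rewrite !mxE !eqxx mulr1 addr0.
Qed.

Lemma Bform_comb (l : 'I_n) (x y : R) (u v : 'rV[R]_n) :
  Bform M l (x *: u + y *: v) = x * Bform M l u + y * Bform M l v.
Proof.
rewrite /Bform.
have -> : \sum_(q < n) M l q * (x *: u + y *: v) 0 q =
          x * \sum_(q < n) M l q * u 0 q + y * \sum_(q < n) M l q * v 0 q.
  rewrite !mulr_sumr -big_split; apply: eq_bigr => q _.
  by rewrite !mxE mulrDr mulrCA [M l q * (y * _)]mulrCA.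
ring.
Qed.

Lemma srefl_alpha_comb (l p : 'I_n) (x y : R) : M l l = 2 ->
  srefl M l (x *: alpha R l + y *: alpha R p) =
    (- x - M l p * y) *: alpha R l + y *: alpha R p.
Proof.
move=> Mll; rewrite /srefl Bform_comb !Bform_alpha Mll.
by apply/rowP => q; rewrite !mxE; field.
Qed.

End ReflectionFormulas.

Section ChebyshevCoordinates.

Context {R : realType} {n : nat} {M : 'M[R]_n} {i j : 'I_n} {r : R}.
Hypotheses (Mii : M i i = 2) (Mjj : M j j = 2) (Mij_lt0 : M i j < 0).
Hypothesis r2_eq : r ^+ 2 = M i j * M j i.

Definition chebU_comb (p q : nat) : 'rV[R]_n :=
  chebU r p *: alpha R i + (r * chebU r q / - M i j) *: alpha R j.

Let Mij_neq0 : M i j != 0. Proof. exact: ltr0_neq0. Qed.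

Lemma srefl_j_chebU_comb p : srefl M j (chebU_comb p.+1 p) = chebU_comb p.+1 p.+2.
Proof.
rewrite /chebU_comb addrC srefl_alpha_comb // addrC chebUSS mulrBr mulrA -expr2 r2_eq.
by congr (_ *: _ + _ *: _); field.
Qed.

Lemma srefl_i_chebU_comb p : srefl M i (chebU_comb p p.+1) = chebU_comb p.+2 p.+1.
Proof.
rewrite /chebU_comb srefl_alpha_comb // chebUSS.
by congr (_ *: _ + _ *: _); field.
Qed.

Lemma sisj_pow_alpha k : sisj_pow M i j k (alpha R i) = chebU_comb (2 * k).+1 (2 * k).
Proof.
elim: k => [|k IHk]; first by rewrite /chebU_comb /= mulr0 mul0r scale0r scale1r addr0.
rewrite /sisj_pow iterS -/(sisj_pow M i j k (alpha R i)) IHk.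
by rewrite srefl_j_chebU_comb srefl_i_chebU_comb mulnS.
Qed.

Lemma srefl_sisj_pow_alpha k :
  srefl M j (sisj_pow M i j k (alpha R i)) = chebU_comb (2 * k).+1 (2 * k).+2.
Proof. by rewrite sisj_pow_alpha srefl_j_chebU_comb. Qed.

End ChebyshevCoordinates.

Section DihedralSigns.

Variables (R : realType) (n : nat) (M : 'M[R]_n) (i j : 'I_n) (k : nat).
Hypotheses (hij : i != j) (Mii : M i i = 2) (Mjj : M j j = 2) (Mij_le0 : M i j <= 0).
Hypothesis k_gt0 : (0 < k)%N.

Let Mij_lt0_of_prod_gt0 : 0 < M i j * M j i -> M i j < 0.
Proof.
move=> prod_gt0; rewrite lt_neqAle Mij_le0 andbT.
by apply: contraTneq prod_gt0 => ->; rewrite mul0r ltxx.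
Qed.

Lemma sisj_pow_alpha_inf : mij_inf M i j ->
  (exists a b : R, 0 < a /\ 0 < b /\
     sisj_pow M i j k (alpha R i) = a *: alpha R i + b *: alpha R j) /\
  (exists c d : R, 0 < c /\ 0 < d /\
     srefl M j (sisj_pow M i j k (alpha R i)) = c *: alpha R i + d *: alpha R j).
Proof.
rewrite /mij_inf => prod_ge4; set r := Num.sqrt (M i j * M j i).
have r2_eq : r ^+ 2 = M i j * M j i by rewrite sqr_sqrtr //; lra.
have r_ge2 : 2 <= r by have := sqrtr_ge0 (M i j * M j i); rewrite -/r; nra.
have Mij_lt0 : M i j < 0 by apply: Mij_lt0_of_prod_gt0; lra.
have coef_gt0 p : (0 < p)%N -> 0 < r * chebU r p / - M i j.
  by move=> p_gt0; rewrite divr_gt0 ?oppr_gt0 ?mulr_gt0 ?chebU_gt0 //; lra.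
rewrite (srefl_sisj_pow_alpha Mii Mjj Mij_lt0 r2_eq) (sisj_pow_alpha Mii Mjj Mij_lt0 r2_eq).
split; do 2 eexists; (split; last split; last reflexivity);
  by rewrite ?chebU_gt0 ?coef_gt0 //; lia.
Qed.

Section Finite.

Variable m : nat.
Hypothesis mij_m : mij_is M i j m.

Let r : R := 2 * cos (pi / m%:R).

Let m_ge2 : (2 <= m)%N. Proof. by case: mij_m. Qed.

Let r2_eq : r ^+ 2 = M i j * M j i.
Proof. by case: mij_m => _ ->; rewrite /r; ring. Qed.

Hypothesis m_gt2 : (2 < m)%N.

Let r_gt0 : 0 < r.
Proof. by rewrite mulr_gt0 ?cos_pi_div_gt0. Qed.

Let Mij_lt0 : M i j < 0.
Proof. by apply: Mij_lt0_of_prod_gt0; rewrite -r2_eq exprn_gt0. Qed.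

Lemma sisj_pow_alpha_fin : (2 * k < m)%N ->
  (exists a b : R, 0 <= a /\ 0 < b /\
     sisj_pow M i j k (alpha R i) = a *: alpha R i + b *: alpha R j) /\
  ((exists c : R, sisj_pow M i j k (alpha R i) = c *: alpha R j) <->
     (odd m /\ k = ((m - 1) %/ 2)%N)) /\
  (odd m -> k = ((m - 1) %/ 2)%N ->
     sisj_pow M i j k (alpha R i) = (- M j i / (2 * cos (pi / m%:R))) *: alpha R j).
Proof.
move=> two_k_lt_m; rewrite (sisj_pow_alpha Mii Mjj Mij_lt0 r2_eq) /chebU_comb -/r.
split; last split.
- do 2 eexists; split; last split; last reflexivity.
    by rewrite chebU_pi_div_ge0.
  by rewrite divr_gt0 ?oppr_gt0 // mulr_gt0 // chebU_pi_div_gt0 //; lia.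
- rewrite alpha_comb_eq_scale_r // chebU_pi_div_eq0 // ?odd_eq_half //; lia.
move=> m_odd k_eq; have m_eq : (2 * k).+1 = m by apply/odd_eq_half.
rewrite m_eq chebU_pi_div_m // scale0r add0r.
have -> : (2 * k)%N = m.-1 by rewrite -m_eq.
rewrite chebU_pi_div_pred // mulr1; congr (_ *: _).
apply/eqP; rewrite eqr_div ?lt0r_neq0 ?oppr_gt0 //; apply/eqP.
by rewrite -expr2 r2_eq; ring.
Qed.

Lemma srefl_sisj_pow_alpha_fin : (2 * k < m - 1)%N ->
  (exists a b : R, 0 < a /\ 0 <= b /\
     srefl M j (sisj_pow M i j k (alpha R i)) = a *: alpha R i + b *: alpha R j) /\
  ((exists c : R, srefl M j (sisj_pow M i j k (alpha R i)) = c *: alpha R i) <->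
     (~~ odd m /\ k = ((m - 2) %/ 2)%N)) /\
  (~~ odd m -> k = ((m - 2) %/ 2)%N ->
     srefl M j (sisj_pow M i j k (alpha R i)) = alpha R i).
Proof.
move=> two_k_lt; rewrite (srefl_sisj_pow_alpha Mii Mjj Mij_lt0 r2_eq) /chebU_comb -/r.
have coef_eq0 : r * chebU r (2 * k).+2 / - M i j = 0 <-> chebU r (2 * k).+2 = 0.
  split=> [/eqP|->]; last by rewrite mulr0 mul0r.
  rewrite mulf_eq0 invr_eq0 oppr_eq0 (negbTE (ltr0_neq0 Mij_lt0)) orbF.
  by rewrite (mulf_eq0 r) (negbTE (lt0r_neq0 r_gt0)) => /eqP.
split; last split.
- do 2 eexists; split; last split; last reflexivity.
    by rewrite chebU_pi_div_gt0 //; lia.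
  apply: divr_ge0; last by rewrite oppr_ge0 ltW.
  by rewrite mulr_ge0 ?(ltW r_gt0) ?chebU_pi_div_ge0 //; lia.
- rewrite alpha_comb_eq_scale_l // coef_eq0 chebU_pi_div_eq0 // ?even_eq_half //; lia.
move=> m_even k_eq; have m_eq : (2 * k).+2 = m by apply/(even_eq_half _ _ m_ge2).
rewrite m_eq chebU_pi_div_m // mulr0 mul0r scale0r addr0.
have -> : (2 * k).+1 = m.-1 by rewrite -m_eq.
by rewrite chebU_pi_div_pred // scale1r.
Qed.

End Finite.

End DihedralSigns.

Theorem lemma4p2 (R : realType) (n : nat) (M : 'M[R]_n) (i j : 'I_n) (k : nat) :
  is_EGCM M -> i != j -> (0 < k)%N ->
  (mij_inf M i j ->
     (exists a b : R, 0 < a /\ 0 < b /\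
        sisj_pow M i j k (alpha R i) = a *: alpha R i + b *: alpha R j) /\
     (exists c d : R, 0 < c /\ 0 < d /\
        srefl M j (sisj_pow M i j k (alpha R i)) = c *: alpha R i + d *: alpha R j)) /\
  (forall m : nat, mij_is M i j m ->
     ((2 * k < m)%N ->
        (exists a b : R, 0 <= a /\ 0 < b /\
           sisj_pow M i j k (alpha R i) = a *: alpha R i + b *: alpha R j) /\
        ((exists c : R, sisj_pow M i j k (alpha R i) = c *: alpha R j) <->
           (odd m /\ k = ((m - 1) %/ 2)%N)) /\
        (odd m -> k = ((m - 1) %/ 2)%N ->
           sisj_pow M i j k (alpha R i)
             = (- M j i / (2 * cos (pi / m%:R))) *: alpha R j)) /\
     ((2 * k < m - 1)%N ->
        (exists a b : R, 0 < a /\ 0 <= b /\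
           srefl M j (sisj_pow M i j k (alpha R i)) = a *: alpha R i + b *: alpha R j) /\
        ((exists c : R, srefl M j (sisj_pow M i j k (alpha R i)) = c *: alpha R i) <->
           (~~ odd m /\ k = ((m - 2) %/ 2)%N)) /\
        (~~ odd m -> k = ((m - 2) %/ 2)%N ->
           srefl M j (sisj_pow M i j k (alpha R i)) = alpha R i))).
Proof.
move=> [Mdiag [Moff _]] hij k_gt0; have Mij_le0 := Moff i j hij.
split; first exact: sisj_pow_alpha_inf.
move=> m mij_m; have m_ge2 : (2 <= m)%N by case: mij_m.
split=> two_k_lt.
- by apply: sisj_pow_alpha_fin => //; lia.
- by apply: srefl_sisj_pow_alpha_fin => //; lia.
Qed.
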